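(* Let $\mathbb B$ be a separable Banach space and $\mu$ a finite nonnegative Borel measure on $\mathbb B$. Then there exist a separable Banach space $\hat{\mathbb B}$ and a linear isometric embedding $\iota\colon\mathbb B\hookrightarrow\hat{\mathbb B}$ such that $\hat{\mathbb B}$ has the $\iota_\#\mu$-metric approximation property.
   Context: For a separable Banach space $\mathbb E$ and a finite nonnegative Borel measure $\nu$ on $\mathbb E$, $\mathbb E$ has the $\nu$-metric approximation property if there exists a sequence of finite-rank linear 1-Lipschitz maps $p_n\colon\mathbb E\to\mathbb E$ such that $\lim_n\|p_n(x)-x\|_{\mathbb E}=0$ for $\nu$-a.e. $x\in\mathbb E$. *)

From HB Require Import structures.
From mathcomp Require Import all_boot all_order all_algebra.
From mathcomp Require Import all_classical all_reals all_analysis.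
Set Implicit Arguments. Unset Strict Implicit. Unset Printing Implicit Defensive.
Import Order.TTheory GRing.Theory Num.Theory.
Import numFieldNormedType.Exports.
Local Open Scope classical_set_scope.
Local Open Scope ring_scope.

Definition borel (R : realType) (V : normedModType R) :=
  g_sigma_algebraType (@open V).

Definition separable (T : topologicalType) : Prop :=
  exists D : set T, countable D /\ dense D.

Definition finite_rank (R : realType) (E F : normedModType R) (p : E -> F) : Prop :=
  exists (k : nat) (v : 'I_k -> F),
    forall x, exists c : 'I_k -> R, p x = \sum_(i < k) c i *: v i.

Definition nu_MAP (R : realType) (E : normedModType R)
    (nu : set (borel E) -> \bar R) : Prop :=
  exists p : nat -> {linear E -> E},
    (forall n, finite_rank (p n)) /\
    (forall n (x y : E), `|p n x - p n y| <= `|x - y|) /\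
    (exists N : set (borel E), negligible nu N /\
       forall x : E, ~ N x -> (fun n => `|p n x - x|) @ \oo --> (0 : R)).

(* A sequential Hahn-Banach argument gives, for a dense sequence (e_k) of B,
   functionals g_k of norm at most one with g_k(e_k) = |e_k|, so that
   x |-> (g_k x)_k is a linear isometry into bounded sequences.  The bounded
   sequences (g_k(e_j))_k can be discretised simultaneously: there are maps
   r_n : nat -> nat of finite range with r_n o r_m = r_n for n <= m along which
   |g_(r_n k)(e_j) - g_k(e_j)| < 1/(n+1) for j <= n.  The sequences f with
   f o r_n -> f uniformly form a separable Banach space containing the image
   of B, on which f |-> f o r_n are finite-rank contractions converging
   pointwise to the identity: the approximation property holds everywhere,
   whatever the measure. *)

From HB Require Import structures.
From mathcomp Require Import all_boot all_order all_algebra.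
From mathcomp Require Import all_classical all_reals all_analysis.
From mathcomp.algebra_tactics Require Import ring lra.

Set Implicit Arguments. Unset Strict Implicit. Unset Printing Implicit Defensive.
Import Order.TTheory GRing.Theory Num.Theory.
Import numFieldNormedType.Exports.
Local Open Scope classical_set_scope.
Local Open Scope ring_scope.

Section InfRange.
Variable R : realType.

Lemma inf_range_le I (F : I -> R) b : (forall t, b <= F t) -> forall t, inf (range F) <= F t.
Proof. by move=> Fb t; apply: ge_inf; [exists b => _ [u _ <-] | exists t]. Qed.

Lemma le_inf_range I (F : I -> R) b (t0 : I) : (forall t, b <= F t) -> b <= inf (range F).
Proof. by move=> Fb; apply: lb_le_inf; [exists (F t0), t0 | move=> _ [u _ <-]]. Qed.

Lemma inf_range_adherent I (F : I -> R) b (t0 : I) eps : 0 < eps ->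
  (forall t, b <= F t) -> exists t, F t < inf (range F) + eps.
Proof.
move=> e0 Fb; have [|_ [t _ <-]] := @inf_adherent _ (range F) _ e0; last by exists t.
by split; [exists (F t0), t0 | exists b => _ [u _ <-]].
Qed.

End InfRange.

Definition dense_seq (R : realType) (V : normedModType R) (e : nat -> V) :=
  forall z eps, 0 < eps -> exists k, `|z - e k| < eps.

Section SequentialHahnBanach.
Variables (R : realType) (V : normedModType R).

Definition sublinear (p : V -> R) :=
  (forall y z, p (y + z) <= p y + p z) /\ (forall a y, 0 < a -> p (a *: y) = a * p y).

Section SublinearTheory.
Variable p : V -> R.
Hypothesis p_sub : sublinear p.

Lemma sublinearD y z : p (y + z) <= p y + p z. Proof. by case: p_sub. Qed.

Lemma sublinearZ a y : 0 < a -> p (a *: y) = a * p y. Proof. by case: p_sub => _; apply. Qed.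

Lemma sublinear0 : p 0 = 0.
Proof. by have := sublinearZ 0 (ltr0n _ 2); rewrite scaler0; lra. Qed.

Lemma sublinearN_ge y : 0 <= p y + p (- y).
Proof. by rewrite -sublinear0 -(subrr y); exact: sublinearD. Qed.

Lemma sublinearZ_ge t v : t * p v <= p (t *: v).
Proof.
have [t0|t0|->] := ltgtP t 0; last by rewrite scale0r sublinear0 mul0r.
- have := sublinearN_ge (t *: v); rewrite -scaleNr (@sublinearZ (- t)) ?oppr_gt0 //; lra.
- by rewrite sublinearZ.
Qed.

Lemma sublinearB u w : p u - p w <= p (u - w).
Proof. by have := sublinearD w (u - w); rewrite addrC subrK; lra. Qed.

End SublinearTheory.

Definition affine_along (p : V -> R) (w : V) (c : R) :=
  forall y s, p (y + s *: w) = p y + s * c.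

(* The largest sublinear minorant of p that is affine with slope p v along v. *)
Definition hb_step (p : V -> R) (v y : V) :=
  inf (range (fun t : R => p (y + t *: v) - t * p v)).

Section HBStep.
Variables (p : V -> R) (v : V).
Hypothesis p_sub : sublinear p.

Lemma hb_step_lb y t : - p (- y) <= p (y + t *: v) - t * p v.
Proof.
have := sublinearZ_ge p_sub t v; have := sublinearD p_sub (y + t *: v) (- y).
rewrite addrC addKr; lra.
Qed.

Lemma hb_step_le y t : hb_step p v y <= p (y + t *: v) - t * p v.
Proof. exact: (inf_range_le (F := fun t : R => _) (hb_step_lb y)). Qed.

Lemma hb_step_ge y b : (forall t, b <= p (y + t *: v) - t * p v) -> b <= hb_step p v y.
Proof. exact: le_inf_range 0. Qed.

Lemma hb_step_le_self y : hb_step p v y <= p y.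
Proof. by have := hb_step_le y 0; rewrite scale0r addr0 mul0r subr0. Qed.

Lemma hb_step_affine : affine_along (hb_step p v) v (p v).
Proof.
move=> y s; apply/le_anti/andP; split.
- rewrite -lerBlDr; apply: hb_step_ge => t.
  by have := hb_step_le (y + s *: v) (t - s); rewrite -addrA -scalerDl subrKC; lra.
- apply: hb_step_ge => t; rewrite -addrA -scalerDl.
  by have := hb_step_le y (s + t); lra.
Qed.

Lemma hb_step_affine_keep w c : affine_along p w c -> affine_along (hb_step p v) w c.
Proof.
move=> pw y s; apply/le_anti/andP; split.
- rewrite -lerBlDr; apply: hb_step_ge => t.
  by have := hb_step_le (y + s *: w) t; rewrite addrAC pw; lra.
- apply: hb_step_ge => t; rewrite addrAC pw.
  by have := hb_step_le y t; lra.
Qed.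

Lemma hb_step_sublinear : sublinear (hb_step p v).
Proof.
split=> [y z|a y a0].
- suff /hb_step_ge : forall t2,
      hb_step p v (y + z) - hb_step p v y <= p (z + t2 *: v) - t2 * p v by lra.
  move=> t2; suff /hb_step_ge : forall t1, hb_step p v (y + z) -
      (p (z + t2 *: v) - t2 * p v) <= p (y + t1 *: v) - t1 * p v by lra.
  move=> t1; have := hb_step_le (y + z) (t1 + t2).
  have := sublinearD p_sub (y + t1 *: v) (z + t2 *: v); rewrite addrACA -scalerDl; lra.
- apply/le_anti/andP; split.
  + rewrite -ler_pdivrMl //; apply: hb_step_ge => t; rewrite ler_pdivrMl //.
    have := hb_step_le (a *: y) (a * t).
    by rewrite -scalerA -scalerDr (sublinearZ p_sub) //; nra.
  + apply: hb_step_ge => t.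
    have -> : a *: y + t *: v = a *: (y + (t / a) *: v).
      by rewrite scalerDr scalerA mulrCA mulfV ?gt_eqF // mulr1.
    have -> : t * p v = a * ((t / a) * p v) by field; rewrite gt_eqF.
    by rewrite (sublinearZ p_sub) // -mulrBr ler_pM2l // hb_step_le.
Qed.

End HBStep.

Section HBSequence.
Variables (x0 : V) (e : nat -> V).

Let dir n := if n is n'.+1 then e n' else x0.

Fixpoint hb_seq n : V -> R := if n is n'.+1 then hb_step (hb_seq n') (dir n') else Num.norm.

Lemma hb_seq_sublinear n : sublinear (hb_seq n).
Proof.
elim: n => [|n IH] /=; last exact: hb_step_sublinear.
by split=> [|a y a0]; [exact: ler_normD | rewrite normrZ gtr0_norm].
Qed.

Lemma hb_seq_antitone n m y : (n <= m)%N -> hb_seq m y <= hb_seq n y.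
Proof.
elim: m => [|m IH]; first by rewrite leqn0 => /eqP ->.
rewrite leq_eqVlt ltnS => /orP[/eqP -> //|/IH]; apply: le_trans.
exact: hb_step_le_self (hb_seq_sublinear m) y.
Qed.

Lemma hb_seq_le_norm n y : hb_seq n y <= `|y|.
Proof. exact: hb_seq_antitone 0 n y (leq0n n). Qed.

Lemma hb_seq_ge n y : - `|y| <= hb_seq n y.
Proof.
have := sublinearN_ge (hb_seq_sublinear n) y; have := hb_seq_le_norm n (- y).
rewrite normrN; lra.
Qed.

Lemma hb_seq_affine n k : (k < n)%N -> affine_along (hb_seq n) (dir k) (hb_seq k (dir k)).
Proof.
elim: n => [//|n IH]; rewrite ltnS leq_eqVlt => /orP[/eqP ->|/IH kn] /=.
  exact: hb_step_affine (hb_seq_sublinear n).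
exact: hb_step_affine_keep (hb_seq_sublinear n) _ _ kn.
Qed.

Definition hb_inf y := inf (range (fun n => hb_seq n y)).

Lemma hb_inf_le n y : hb_inf y <= hb_seq n y.
Proof. exact: (inf_range_le (F := fun n => _) (@hb_seq_ge^~ y)). Qed.

Lemma hb_inf_ge y b : (forall n, b <= hb_seq n y) -> b <= hb_inf y.
Proof. exact: le_inf_range 0%N. Qed.

Lemma hb_inf_adherent y eps : 0 < eps -> exists n, hb_seq n y < hb_inf y + eps.
Proof. by move=> e0; exact: (inf_range_adherent (F := fun n => _) 0%N e0 (@hb_seq_ge^~ y)). Qed.

Lemma hb_inf_le_norm y : hb_inf y <= `|y|.
Proof. exact: le_trans (hb_inf_le 0 y) _. Qed.

Lemma hb_inf_sublinear : sublinear hb_inf.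
Proof.
split=> [y z|a y a0].
- apply/ler_addgt0Pr => eps e0; have e2 : 0 < eps / 2 by rewrite divr_gt0.
  have [n1 h1] := hb_inf_adherent y e2; have [n2 h2] := hb_inf_adherent z e2.
  have := hb_inf_le (maxn n1 n2) (y + z).
  have := sublinearD (hb_seq_sublinear (maxn n1 n2)) y z.
  have := hb_seq_antitone y (leq_maxl n1 n2); have := hb_seq_antitone z (leq_maxr n1 n2).
  lra.
- apply/le_anti/andP; split.
  + rewrite -ler_pdivrMl //; apply: hb_inf_ge => n.
    by rewrite ler_pdivrMl // -(sublinearZ (hb_seq_sublinear n)) // hb_inf_le.
  + by apply: hb_inf_ge => n; rewrite (sublinearZ (hb_seq_sublinear n)) // ler_pM2l // hb_inf_le.
Qed.

Lemma hb_inf_affine k : affine_along hb_inf (dir k) (hb_seq k (dir k)).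
Proof.
move=> y s; have kn n : (k < n + k.+1)%N by rewrite addnS ltnS leq_addl.
apply/le_anti/andP; split.
- rewrite -lerBlDr; apply: hb_inf_ge => n.
  have := hb_inf_le (n + k.+1) (y + s *: dir k); rewrite hb_seq_affine //.
  have := hb_seq_antitone y (leq_addr k.+1 n); lra.
- apply: hb_inf_ge => n.
  have := hb_inf_le (n + k.+1) y; have := hb_seq_affine (kn n) y s.
  have := hb_seq_antitone (y + s *: dir k) (leq_addr k.+1 n); lra.
Qed.

Lemma hb_inf_x0 : hb_inf x0 = `|x0|.
Proof.
have := hb_inf_affine 0 0 1; rewrite add0r scale1r mul1r /= => ->.
by rewrite (sublinear0 hb_inf_sublinear) add0r.
Qed.

Hypothesis e_dense : dense_seq e.

Lemma hb_inf_lipschitz u w : `|hb_inf u - hb_inf w| <= `|u - w|.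
Proof.
have lip u' w' : hb_inf u' - hb_inf w' <= `|u' - w'|.
  exact: le_trans (sublinearB hb_inf_sublinear _ _) (hb_inf_le_norm _).
rewrite ler_norml; apply/andP; split; last exact: lip.
by rewrite lerNl opprB distrC lip.
Qed.

Lemma hb_infD y z : hb_inf (y + z) = hb_inf y + hb_inf z.
Proof.
have affine_e k u : hb_inf (u + e k) = hb_inf u + hb_inf (e k).
  have := hb_inf_affine k.+1 u 1; have := hb_inf_affine k.+1 0 1.
  by rewrite !scale1r !mul1r add0r (sublinear0 hb_inf_sublinear) add0r /= => <-.
apply/eqP; rewrite -subr_eq0 -normr_le0; apply/ler_addgt0Pr => eps e0; rewrite add0r.
have [k zk] := e_dense z (divr_gt0 e0 (ltr0n _ 2)).
have h1 : `|hb_inf (y + z) - (hb_inf y + hb_inf (e k))| <= `|z - e k|.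
  by rewrite -affine_e -(addrKA y z (e k)) [z + y]addrC hb_inf_lipschitz.
have h2 := hb_inf_lipschitz (e k) z; rewrite (distrC (e k)) in h2.
rewrite (_ : _ - _ = hb_inf (y + z) - (hb_inf y + hb_inf (e k)) + (hb_inf (e k) - hb_inf z));
  last by ring.
by apply: le_trans (ler_normD _ _) _; have := ltW zk; lra.
Qed.

Lemma hb_infN y : hb_inf (- y) = - hb_inf y.
Proof. by apply/eqP; rewrite -addr_eq0 -hb_infD addNr (sublinear0 hb_inf_sublinear). Qed.

Lemma hb_inf_linear : GRing.linear_for *%R hb_inf.
Proof.
move=> a u v; rewrite hb_infD; congr (_ + _).
have [a0|a0|->] := ltgtP a 0; last by rewrite scale0r mul0r (sublinear0 hb_inf_sublinear).
- rewrite -[a]opprK scaleNr hb_infN (sublinearZ hb_inf_sublinear) ?oppr_gt0 //; ring.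
- exact: (sublinearZ hb_inf_sublinear).
Qed.

End HBSequence.

Lemma norming_functional (e : nat -> V) : dense_seq e ->
  forall x0 : V, exists g : {scalar V}, (forall y, `|g y| <= `|y|) /\ g x0 = `|x0|.
Proof.
move=> e_dense x0; pose f := hb_inf x0 e.
pose g : {scalar V} := HB.pack f (GRing.isLinear.Build R V R *%R f (hb_inf_linear x0 e_dense)).
exists g; split; last exact: hb_inf_x0.
move=> y; rewrite ler_norml hb_inf_le_norm andbT lerNl -hb_infN //.
by rewrite -normrN hb_inf_le_norm.
Qed.

End SequentialHahnBanach.

Section RetractionsFromCodes.
Variables (C : nat -> finType) (c : forall n, nat -> C n).
Hypothesis c_refine : forall n m k l, (n <= m)%N -> c m k = c m l -> c n k = c n l.

Let repr n (x : C n) := xget 0%N [set l | c n l = x].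

Lemma retractions_of_codes : exists r : nat -> nat -> nat,
  [/\ forall n m k, (n <= m)%N -> r n (r m k) = r n k,
      forall n, exists N, forall k, (r n k < N)%N &
      forall n k, c n (r n k) = c n k].
Proof.
have reprK n k : c n (repr (c n k)) = c n k.
  exact: (xgetPex 0%N (ex_intro [set l | c n l = c n k] k erefl)).
exists (fun n k => repr (c n k)); split=> [n m k nm | n | //].
  by rewrite (c_refine nm (reprK m k)).
by exists (\max_(x : C n) repr x).+1 => k; rewrite ltnS (leq_bigmax (c n k)).
Qed.

End RetractionsFromCodes.

Lemma truncn_dist_lt (R : archiRealDomainType) (x y : R) : 0 <= x -> 0 <= y ->
  Num.truncn x = Num.truncn y -> `|x - y| < 1.
Proof.
move=> /truncn_itv/andP[x1 x2] /truncn_itv/andP[y1 y2] xy.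
rewrite xy -natr1 in x1 x2; rewrite -natr1 in y2.
by rewrite ltr_norml; apply/andP; split; lra.
Qed.

Section RetractionsOfBounded.
Variables (R : realType) (a : nat -> nat -> R) (M : nat -> R).
Hypothesis aM : forall j k, `|a j k| <= M j.

(* All multipliers i <= n are recorded, not only n, so that the codes at level m
   determine those at every level n <= m. *)
Let level i j k := Num.truncn (i.+1%:R * (a j k + M j)).

Let B n := \max_(j < n.+1) Num.truncn (n.+1%:R * (2 * M j)).

Lemma level_le_bound n i j k : (i <= n)%N -> (j <= n)%N -> (level i j k <= B n)%N.
Proof.
move=> i_n j_n; apply: leq_trans (leq_bigmax (Ordinal (j_n : j < n.+1)%N)); apply: le_truncn.
have := aM j k; rewrite ler_norml => /andP[a1 a2].
apply: ler_pM; rewrite ?ler_nat //; lra.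
Qed.

Let code n k : {ffun 'I_n.+1 * 'I_n.+1 -> 'I_(B n).+1} :=
  [ffun ij : 'I_n.+1 * 'I_n.+1 => inord (level ij.1 ij.2 k)].

Lemma code_level n k l i j : code n k = code n l -> (i <= n)%N -> (j <= n)%N ->
  level i j k = level i j l.
Proof.
move=> + i_n j_n => /ffunP/(_ (inord i, inord j)); rewrite !ffunE /= !inordK ?ltnS //.
by move=> /(congr1 val); rewrite /= !inordK // ltnS level_le_bound.
Qed.

Lemma retractions_of_bounded : exists r : nat -> nat -> nat,
  [/\ forall n m k, (n <= m)%N -> r n (r m k) = r n k,
      forall n, exists N, forall k, (r n k < N)%N &
      forall n j k, (j <= n)%N -> `|a j (r n k) - a j k| < n.+1%:R^-1].
Proof.
have [|r [rK rN rc]] := @retractions_of_codes _ code.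
  move=> n m k l nm /code_level eq_m; apply/ffunP => -[i j]; rewrite !ffunE /=.
  by rewrite eq_m // (leq_trans _ nm) // -ltnS.
exists r; split=> // n j k j_n.
have := code_level (rc n k) (leqnn n) j_n.
have ge0 k' : 0 <= n.+1%:R * (a j k' + M j).
  by rewrite mulr_ge0 // -lerBlDr sub0r; have := aM j k'; rewrite ler_norml => /andP[].
move=> /(truncn_dist_lt (ge0 _) (ge0 _)).
rewrite -mulrBr opprD addrACA subrr addr0 normrM gtr0_norm ?ltr0n // => lt1.
by rewrite -[_^-1]mulr1 ltr_pdivlMl ?ltr0n.
Qed.

End RetractionsOfBounded.

Section RegularSequences.
Variables (R : realType) (r : nat -> nat -> nat).

Definition bounded_seq (f : nat -> R) := exists M, forall k, `|f k| <= M.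

Definition retract_cvg (f : nat -> R) := forall eps, 0 < eps ->
  exists n0, forall n, (n0 <= n)%N -> forall k, `|f (r n k) - f k| <= eps.

Definition regular : {pred nat -> R} := mem [set f | bounded_seq f /\ retract_cvg f].

Lemma regularP f : reflect (bounded_seq f /\ retract_cvg f) (f \in regular).
Proof. by apply: (iffP idP) => [/set_mem|/mem_set]. Qed.

Lemma regular_submod_closed : subsemimod_closed regular.
Proof.
split; first split.
- apply/regularP; split; first by exists 0 => k; rewrite normr0.
  by move=> eps e0; exists 0%N => n _ k; rewrite subrr normr0 ltW.
- move=> f g /regularP[[M1 hM1] hf] /regularP[[M2 hM2] hg]; apply/regularP; split.
    exists (M1 + M2) => k; exact: le_trans (ler_normD _ _) (lerD (hM1 k) (hM2 k)).
  move=> eps e0; have e2 : 0 < eps / 2 by rewrite divr_gt0.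
  have [n1 h1] := hf _ e2; have [n2 h2] := hg _ e2.
  exists (maxn n1 n2) => n; rewrite geq_max => /andP[/h1 {}h1 /h2 {}h2] k.
  rewrite !fctE opprD addrACA; apply: le_trans (ler_normD _ _) _.
  have := h1 k; have := h2 k; lra.
- move=> a f /regularP[[M hM] hf]; apply/regularP; split.
    by exists (`|a| * M) => k; rewrite fctE normrM ler_wpM2l.
  move=> eps e0; have a1 : 0 < `|a| + 1 by rewrite ltr_wpDl.
  have [n0 h0] := hf (eps / (`|a| + 1)) (divr_gt0 e0 a1).
  exists n0 => n /h0 {}h0 k; rewrite !fctE -mulrBr normrM.
  apply: le_trans (ler_wpM2l (normr_ge0 a) (h0 k)) _.
  rewrite mulrA ler_pdivrMr //; have := normr_ge0 a; nra.
Qed.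

HB.instance Definition _ :=
  GRing.isSubmodClosed.Build R (nat -> R) regular regular_submod_closed.

Record rseq := RSeq { rseq_val :> nat -> R; rseq_regular : rseq_val \in regular }.

HB.instance Definition _ := [isSub for rseq_val].
HB.instance Definition _ := [Choice of rseq by <:].
HB.instance Definition _ := [SubChoice_isSubLmodule of rseq by <:].

Lemma rseqP (u v : rseq) : u =1 v -> u = v.
Proof. by move=> uv; apply: val_inj; apply/funext. Qed.

Lemma rseqD (u v : rseq) k : (u + v) k = u k + v k. Proof. by []. Qed.

Lemma rseqB (u v : rseq) k : (u - v) k = u k - v k. Proof. by []. Qed.

Lemma rseqZ a (u : rseq) k : (a *: u) k = a * u k. Proof. by []. Qed.

Lemma rseq_sum I (s : seq I) (P : pred I) (F : I -> rseq) k :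
  (\sum_(i <- s | P i) F i) k = \sum_(i <- s | P i) F i k.
Proof. by elim/big_rec2: _ => // i y1 y2 _ <-. Qed.

Lemma rseq_bounded (u : rseq) : bounded_seq u.
Proof. by have /regularP[] := rseq_regular u. Qed.

Lemma rseq_retract_cvg (u : rseq) : retract_cvg u.
Proof. by have /regularP[] := rseq_regular u. Qed.

Definition rseq_norm (u : rseq) := sup (range (fun k => `|u k|)).

Lemma rseq_norm_ub (u : rseq) k : `|u k| <= rseq_norm u.
Proof.
have [M hM] := rseq_bounded u; apply: ub_le_sup; last by exists k.
by exists M => _ [i _ <-].
Qed.

Lemma rseq_norm_le (u : rseq) b : (forall k, `|u k| <= b) -> rseq_norm u <= b.
Proof. by move=> ub; apply: ge_sup; [exists `|u 0%N|, 0%N | move=> _ [i _ <-]]. Qed.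

Lemma rseq_normD (u v : rseq) : rseq_norm (u + v) <= rseq_norm u + rseq_norm v.
Proof.
apply: rseq_norm_le => k; apply: le_trans (ler_normD _ _) _.
exact: lerD (rseq_norm_ub _ _) (rseq_norm_ub _ _).
Qed.

Lemma rseq_normZ a (u : rseq) : rseq_norm (a *: u) = `|a| * rseq_norm u.
Proof.
apply/eqP; rewrite eq_le; apply/andP; split.
  by apply: rseq_norm_le => k; rewrite [X in `|X|]/= normrM ler_wpM2l ?rseq_norm_ub.
have [->|a0] := eqVneq a 0.
  by rewrite normr0 mul0r; apply: le_trans (normr_ge0 _) (rseq_norm_ub _ 0%N).
rewrite mulrC -ler_pdivlMr ?normr_gt0 //; apply: rseq_norm_le => k.
by rewrite ler_pdivlMr ?normr_gt0 // mulrC -normrM (rseq_norm_ub (a *: u)).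
Qed.

Lemma rseq_norm_eq0 (u : rseq) : rseq_norm u = 0 -> u = 0.
Proof.
by move=> u0; apply: rseqP => k; apply/eqP; rewrite -normr_le0 -u0 rseq_norm_ub.
Qed.

HB.instance Definition _ :=
  Lmodule_isNormed.Build R rseq rseq_normD rseq_normZ rseq_norm_eq0.

Lemma rseq_ball (u v : rseq) eps : ball u eps v -> forall k, `|u k - v k| < eps.
Proof. by rewrite -ball_normE => uv k; apply: le_lt_trans uv; exact: (rseq_norm_ub (u - v)). Qed.

Section Completeness.
Variables (F : set_system rseq) (FF : ProperFilter F) (Fc : cauchy F).

Let Fball : cauchy_ex F := proj1 (cauchyP F) Fc.
Let coord k (u : rseq) := u k.
Let f k := lim (coord k @ F).

Lemma coord_cvg k : coord k @ F --> f k.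
Proof.
apply: R_complete; apply: cauchy_exP => eps e0.
have [u Fu] := Fball e0.
exists (u k); suff : F (coord k @^-1` ball (u k) eps) by [].
by apply: filterS Fu => v /rseq_ball uv; rewrite /= -ball_normE; exact: uv.
Qed.

Lemma ball_lim_le (u : rseq) eps : F (ball u eps) -> forall k, `|u k - f k| <= eps.
Proof.
move=> Fu k; apply/ler_addgt0Pr => d d0.
have Fk : F [set v | `|f k - v k| < d] by exact: (cvgr_dist_lt _ _ (@coord_cvg k)).
have [v [/rseq_ball/(_ k) uv /= vk]] := filter_ex (filterI Fu Fk).
have := ler_distD (v k) (u k) (f k); rewrite distrC in vk; lra.
Qed.

Lemma lim_regular : f \in regular.
Proof.
apply/regularP; split.
  have [u Fu] := Fball ltr01; have [M hM] := rseq_bounded u.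
  exists (M + 1) => k; have := ball_lim_le Fu k; have := hM k.
  have := ler_distD (u k) (f k) 0; rewrite !subr0 distrC; lra.
move=> eps e0; have e3 : 0 < eps / 3 by rewrite divr_gt0.
have [u Fu] := Fball e3; have [n0 h0] := rseq_retract_cvg u e3.
exists n0 => n /h0 {}h0 k.
have := ball_lim_le Fu (r n k); have := ball_lim_le Fu k; have := h0 k.
have := ler_distD (u (r n k)) (f (r n k)) (f k).
have := ler_distD (u k) (u (r n k)) (f k).
rewrite (distrC (f (r n k)) (u (r n k))); lra.
Qed.

Lemma cauchy_rseq_cvg : cvg F.
Proof.
apply/cvg_ex; exists (RSeq lim_regular); apply/fcvgrPdist_lt => eps e0.
have [x Fx] := Fball (divr_gt0 e0 (ltr0n _ 4)).
apply: filterS (Fx) => v /rseq_ball uv.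
apply: (le_lt_trans (y := eps / 2)); last lra.
apply: rseq_norm_le => k; rewrite rseqB /=.
have := ball_lim_le Fx k; have := uv k.
have := ler_distD (x k) (f k) (v k); rewrite (distrC (f k) (x k)); lra.
Qed.

End Completeness.

HB.instance Definition _ := Uniform_isComplete.Build rseq cauchy_rseq_cvg.

End RegularSequences.

Section Retractions.
Variables (R : realType) (r : nat -> nat -> nat).
Hypothesis rK : forall n m k, (n <= m)%N -> r n (r m k) = r n k.
Hypothesis r_bounded : forall n, exists N, forall k, (r n k < N)%N.
Local Notation V := (rseq R r).

Lemma regular_comp n (h : nat -> R) : h \o r n \in regular r.
Proof.
apply/regularP; split.
  have [N rN] := r_bounded n.
  exists (\sum_(i < N) `|h i|) => k /=.
  by rewrite (bigD1 (Ordinal (rN k))) //= lerDl sumr_ge0.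
by move=> eps e0; exists n => m nm k /=; rewrite rK // subrr normr0 ltW.
Qed.

Definition rproj n (u : V) : V := RSeq (regular_comp n u).

Lemma rproj_linear n : linear (rproj n).
Proof. by move=> a u v; apply: rseqP. Qed.

HB.instance Definition _ n :=
  GRing.isLinear.Build R V V _ (rproj n) (rproj_linear n).

Lemma rproj_finite_rank n : finite_rank (rproj n).
Proof.
have [N rN] := r_bounded n.
exists N, (fun i : 'I_N => RSeq (regular_comp n (fun j => (j == i)%:R))) => u.
exists (fun i : 'I_N => u i); apply: rseqP => k.
rewrite rseq_sum (bigD1 (Ordinal (rN k))) // big1 => [|i]; rewrite rseqZ /=.
  by rewrite eqxx mulr1 addr0.
by rewrite -val_eqE /= eq_sym => /negbTE ->; rewrite mulr0.
Qed.

Lemma rproj_lipschitz n (u v : V) : `|rproj n u - rproj n v| <= `|u - v|.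
Proof. by apply: rseq_norm_le => k; rewrite -linearB; exact: (rseq_norm_ub (u - v) (r n k)). Qed.

Lemma rproj_cvg (u : V) : `|rproj n u - u| @[n --> \oo] --> 0.
Proof.
apply/cvgrPdist_le => eps e0; have [n0 un0] := rseq_retract_cvg u e0.
exists n0 => // n /= /un0 un; rewrite sub0r normrN normr_id.
by apply: rseq_norm_le => k; rewrite rseqB; exact: un.
Qed.

Lemma rseq_separable : separable V.
Proof.
pose mk p := RSeq (regular_comp p.1 (fun j => ratr (nth 0 p.2 j) : R)).
exists (range mk); split; first exact: card_le_trans (card_image_le _ _) (countableP _).
move=> O [u Ou] oO; have /nbhs_ballP[eps e0 uO] : nbhs u O by exact: open_nbhs_nbhs.
have e4 : 0 < eps / 4 by rewrite divr_gt0.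
have [n0 un0] := rseq_retract_cvg u e4; have [N rN] := r_bounded n0.
have /choice[q uq] i : exists q : rat, `|u i - ratr q| < eps / 4.
  have [q] := @rat_in_itvoo R (u i - eps / 4) (u i + eps / 4) ltac:(lra).
  by rewrite in_itv /= => /andP[q1 q2]; exists q; rewrite ltr_norml; apply/andP; split; lra.
exists (mk (n0, map q (iota 0 N))); split; last by exists (n0, map q (iota 0 N)).
apply: uO; rewrite -ball_normE /= distrC; apply: (le_lt_trans (y := eps / 2)); last lra.
apply: rseq_norm_le => k; rewrite rseqB /= (nth_map 0%N) ?size_iota // nth_iota // add0n.
apply: le_trans (ler_distD (u (r n0 k)) _ _) _; rewrite [`|_ - u (r n0 k)|]distrC.
have := un0 n0 (leqnn _) k; have := uq (r n0 k); lra.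
Qed.

Lemma rseq_nu_MAP (nu : set (borel V) -> \bar R) : nu set0 = 0%E -> nu_MAP nu.
Proof.
move=> nu0; exists (fun n => rproj n : {linear _ -> _}); split; [|split].
- exact: rproj_finite_rank.
- exact: rproj_lipschitz.
- exists set0; split; last by move=> u _; exact: rproj_cvg.
  by exists set0; split; [exact: measurable0 | exact: nu0 |].
Qed.

End Retractions.

Section Embedding.
Variables (R : realType) (V : normedModType R).
Variables (e : nat -> V) (g : nat -> {scalar V}) (r : nat -> nat -> nat).
Hypothesis e_dense : dense_seq e.
Hypothesis g_le : forall k y, `|g k y| <= `|y|.
Hypothesis g_norming : forall k, g k (e k) = `|e k|.
Hypothesis r_close : forall n j k, (j <= n)%N -> `|g (r n k) (e j) - g k (e j)| < n.+1%:R^-1.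

Lemma functionals_regular x : (fun k => g k x) \in regular r.
Proof.
apply/regularP; split=> [|eps e0]; first by exists `|x|.
have e2 : 0 < eps / 2 by rewrite divr_gt0.
have e4 : 0 < eps / 4 by rewrite divr_gt0.
have [j xj] := e_dense x e4.
have [N _ NP] := near_infty_natSinv_lt (PosNum e2).
exists (maxn j N) => n; rewrite geq_max => /andP[jn /NP/= nN] k.
apply: le_trans (ler_distD (g (r n k) (e j)) _ _) _.
apply: le_trans (lerD (lexx _) (ler_distD (g k (e j)) _ _)) _.
rewrite -!linearB.
apply: le_trans (lerD (g_le _ _) (lerD (ltW (r_close k jn)) (g_le _ _))) _.
rewrite (distrC (e j)); apply: le_trans (lerD (ltW xj) (lerD (ltW nN) (ltW xj))) _; lra.
Qed.

Definition embed x : rseq R r := RSeq (functionals_regular x).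

Lemma embed_linear : linear embed.
Proof. by move=> a x y; apply: rseqP => k; rewrite rseqD rseqZ /= linearP. Qed.

HB.instance Definition _ := GRing.isLinear.Build R V (rseq R r) _ embed embed_linear.

Lemma embed_isometry x : `|embed x| = `|x|.
Proof.
apply/le_anti/andP; split; first by apply: rseq_norm_le => k; exact: g_le.
apply/ler_addgt0Pr => d d0; have d2 : 0 < d / 2 by rewrite divr_gt0.
have [j xj] := e_dense x d2.
have ej : `|e j| <= `|x - e j| + `|embed x|.
  rewrite -g_norming -{1}(subrK x (e j)) linearD.
  apply: le_trans (ler_norm _) (le_trans (ler_normD _ _) (lerD _ (rseq_norm_ub (embed x) j))).
  by rewrite distrC g_le.
have ex : `|x| <= `|x - e j| + `|e j| by rewrite -{1}(subrK (e j) x) ler_normD.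
have := ltW xj; lra.
Qed.

End Embedding.

Lemma separable_dense_seq (R : realType) (V : normedModType R) :
  separable V -> exists e : nat -> V, dense_seq e.
Proof.
move=> [D [/pcard_surjP[f fD] Ddense]]; exists f => z eps e0.
have [w [zw /fD[k _ fkw]]] := Ddense (ball z eps) (ex_intro _ z (ballxx z e0)) (ball_open z eps).
by exists k; rewrite fkw; move: zw; rewrite -ball_normE.
Qed.

Theorem lemma2p4 (R : realType) (B : completeNormedModType R)
    (mu : {finite_measure set (borel B) -> \bar R}) :
  separable B ->
  exists (Bh : completeNormedModType R) (iota : {linear B -> Bh}),
    [/\ separable Bh,
        (forall x : B, `|iota x| = `|x|) &
        nu_MAP (pushforward mu (iota : borel B -> borel Bh))].
Proof.
move=> /separable_dense_seq[e e_dense].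
have /choice[g gP] := fun k => norming_functional e_dense (e k).
have g_le k := proj1 (gP k); have g_norming k := proj2 (gP k).
have [r [rK r_bounded r_close]] :=
  retractions_of_bounded (a := fun j k => g k (e j)) (fun j k => g_le k (e j)).
exists (rseq R r), (embed e_dense g_le r_close : {linear B -> _}); split.
- exact: rseq_separable.
- by move=> x; apply: embed_isometry.
- by apply: (rseq_nu_MAP rK r_bounded); rewrite /pushforward preimage_set0 measure0.
Qed.
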